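(* Let $L_1,L_2$ be positive integers that are both multiples of $4$. Consider the honeycomb lattice on the $L_1\times L_2$ torus: sites $A(\bm R),B(\bm R)$ with $\bm R=m_1\bm a_1+m_2\bm a_2$, $m_\mu\in\mathbb Z/L_\mu\mathbb Z$, and bonds $A(\bm R)$–$B(\bm R)$ of type $c$, $A(\bm R)$–$B(\bm R-\bm a_1)$ of type $a$, $A(\bm R)$–$B(\bm R-\bm a_2)$ of type $b$. Assign to every bond of type $\alpha$ the link matrix $U_{ij}=U_{ji}=U^\alpha$ with $U^a=\tau^y\otimes I_2$, $U^b=-\tau^x\otimes\sigma^z$, $U^c=-\tau^x\otimes\sigma^y$. Let $C_1$ be the noncontractible loop $A(\bm 0)\to B(\bm 0)\to A(\bm a_1)\to B(\bm a_1)\to\cdots\to A(L_1\bm a_1)=A(\bm 0)$ (alternating $c$- and $a$-bonds) and $C_2$ the noncontractible loop $A(\bm 0)\to B(\bm 0)\to A(\bm a_2)\to\cdots\to A(\bm 0)$ (alternating $c$- and $b$-bonds). Then the ordered products of link matrices along $C_1$ and along $C_2$ both equal $I_4$, every elementary hexagon has product $-I_4$, and there exist unitary matrices $g_j$ and signs $\eta_{ij}=\eta_{ji}\in\{\pm1\}$ with $g_iU_{ij}g_j^\dagger=\eta_{ij}I_4$ for every bond of the torus, such that the Hubbard model $-\frac{t}{\sqrt3}\sum_{\langle ij\rangle}\psi_i^\dagger U_{ij}\psi_j+h.c.+\frac U2\sum_j\psi_j^\dagger\psi_j(\psi_j^\dagger\psi_j-1)$ is mapped by $\psi_j\to g_j\psi_j$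 to an explicitly $\mathrm{SU}(4)$-symmetric $\pi$-flux Hubbard model with $\prod_{\langle ij\rangle\in p}\eta_{ij}=-1$ for every hexagon $p$ and $\prod_{\langle ij\rangle\in C_\mu}\eta_{ij}=+1$ for $\mu=1,2$.
   Context: Pauli matrices $\boldsymbol\tau$ act on the first and $\boldsymbol\sigma$ on the second factor of $\mathbb C^2\otimes\mathbb C^2$; $t,U$ are real; $\psi_j$ are four-component fermionic spinors. A gauge transformation acts by $\psi_j\to g_j\psi_j$, $U_{ij}\to g_iU_{ij}g_j^\dagger$. *)

From HB Require Import structures.
From mathcomp Require Import all_boot all_order all_algebra.
From mathcomp Require Import algC spectral sesquilinear.
From mathcomp Require Import mxtens.

Set Implicit Arguments.
Unset Strict Implicit.
Unset Printing Implicit Defensive.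
Import Order.TTheory GRing.Theory Num.Theory Num.Def.
Local Open Scope ring_scope.

Definition pauli_x : 'M[algC]_2 := \matrix_(i < 2, j < 2)
  (if i == j then 0 else 1).
Definition pauli_y : 'M[algC]_2 := \matrix_(i < 2, j < 2)
  (if i == j then 0 else if (i : nat) == 0%N then - 'i else 'i).
Definition pauli_z : 'M[algC]_2 := \matrix_(i < 2, j < 2)
  (if i == j then (if (i : nat) == 0%N then 1 else -1) else 0).
Definition id2 : 'M[algC]_2 := 1%:M.

(* Kronecker product: tau acts on the first factor, sigma on the second.
   'M_(2*2) is convertible to 'M_4. *)
Definition kron (A B : 'M[algC]_2) : 'M[algC]_4 := tensmx A B.

Inductive btype := Ba | Bb | Bc.

Definition Umat (al : btype) : 'M[algC]_4 :=
  match al with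
  | Ba => kron pauli_y id2
  | Bb => - kron pauli_x pauli_z
  | Bc => - kron pauli_x pauli_y
  end.

Definition hadj (M : 'M[algC]_4) : 'M[algC]_4 := (map_mx conjC M)^T.

Section Honeycomb.
Variables (L1 L2 : nat) (h1 : (0 < L1)%N) (h2 : (0 < L2)%N).

(* a site: sublattice flag (false = A, true = B) and cell R = (m1, m2)
   with m_mu in Z / L_mu Z *)
Definition site := (bool * ('I_L1 * 'I_L2))%type.

(* the site X(n1 a1 + n2 a2) for natural numbers n1 n2, reduced mod L *)
Definition mksite (s : bool) (n1 n2 : nat) : site :=
  (s, (Ordinal (ltn_pmod n1 h1), Ordinal (ltn_pmod n2 h2))).
Definition siteA := mksite false.
Definition siteB := mksite true.

(* bond type between A(R) and B(R'):  c if R' = R, a if R' = R - a1,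
   b if R' = R - a2 (equivalently R = R' + a1, resp. R' + a2). *)
Definition bondAB (x y : 'I_L1 * 'I_L2) : option btype :=
  if y == x then Some Bc
  else if siteA (y.1 + 1) y.2 == (false, x) then Some Ba
  else if siteA y.1 (y.2 + 1) == (false, x) then Some Bb
  else None.

Definition bond (i j : site) : option btype :=
  match i, j with
  | (false, x), (true, y) => bondAB x y
  | (true, y), (false, x) => bondAB x y
  | _, _ => None
  end.

Definition adjacent (i j : site) : bool := if bond i j is Some _ then true else false.

Definition U (i j : site) : 'M[algC]_4 :=
  if bond i j is Some al then Umat al else 0.

(* ordered product of a function of consecutive pairs along a path
   [:: i0; i1; ...; in] : F i0 i1 * F i1 i2 * ... * F i(n-1) in *)
Definition pathprod (Rg : pzRingType) (F : site -> site -> Rg) (p : seq site) : Rg :=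
  \prod_(e <- zip p (behead p)) F e.1 e.2.

(* C1 : A(0) -> B(0) -> A(a1) -> B(a1) -> ... -> A(L1 a1) = A(0) *)
Definition C1 : seq site :=
  mkseq (fun k => mksite (odd k) k./2 0) (L1.*2).+1.
(* C2 : A(0) -> B(0) -> A(a2) -> B(a2) -> ... -> A(L2 a2) = A(0) *)
Definition C2 : seq site :=
  mkseq (fun k => mksite (odd k) 0 k./2) (L2.*2).+1.

(* the elementary hexagon attached to cell R = n1 a1 + n2 a2:
   A(R) -c- B(R) -a- A(R+a1) -b- B(R+a1-a2) -c- A(R+a1-a2) -a- B(R-a2) -b- A(R) *)
Definition hexagon (n1 n2 : nat) : seq site :=
  [:: siteA n1 n2; siteB n1 n2; siteA n1.+1 n2; siteB n1.+1 (n2 + L2).-1;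
      siteA n1.+1 (n2 + L2).-1; siteB n1 (n2 + L2).-1; siteA n1 n2].

End Honeycomb.

(* With T1 := U^c U^a and T2 := U^c U^b, the transports A(R) -> A(R + a1) and
   A(R) -> A(R + a2), writing the links as Kronecker products of Pauli matrices
   gives T1^2 = T2^2 = -1, T2 T1 = - T1 T2 and (U^c U^a U^b)^2 = -1.  The last
   identity is the hexagon product, and since 4 | L_mu the products along C1
   and C2, namely T1^L1 and T2^L2, are 1.  For the same reason the gauge
   g_A(m1 a1 + m2 a2) = T1^m1 T2^m2, g_B(R) = g_A(R) U^c is well defined on the
   torus.  It turns every link into a sign, +1 on c- and b-bonds and (-1)^m2 on
   a-bonds, the sign coming from moving T1 past T2^m2.  Link products around a
   closed loop are gauge covariant, so the signs have the same loop products as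
   the links. *)

From mathcomp Require Import all_boot all_algebra.
From mathcomp Require Import algC spectral sesquilinear mxtens.

Set Implicit Arguments.
Unset Strict Implicit.
Unset Printing Implicit Defensive.

Import GRing.Theory Num.Theory.
Local Open Scope ring_scope.
Local Open Scope sesquilinear_scope.

Section RingPowers.
Variable R : pzRingType.
Implicit Types x y : R.

Lemma expr4_sqrN1 x : x * x = -1 -> x ^+ 4 = 1.
Proof. by move=> xx; rewrite (exprM x 2 2) [x ^+ 2]expr2 xx sqrrN expr1n. Qed.

Lemma anticomm_exprr x y n : y * x = - (x * y) -> x * y ^+ n = (-1) ^+ n * (y ^+ n * x).
Proof.
move=> yx; elim: n => [|n IH]; first by rewrite !expr0 !mul1r mulr1.
by rewrite exprSr mulrA IH exprS mulN1r mulNr -!mulrA yx !mulrN opprK.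
Qed.

Lemma mulr_signCA x y n : x * ((-1) ^+ n * y) = (-1) ^+ n * (x * y).
Proof. by rewrite mulrA (commr_sign x) mulrA. Qed.

Lemma signr_pm1 n : (-1) ^+ n = 1 :> R \/ (-1) ^+ n = -1 :> R.
Proof. by rewrite -signr_odd; case: odd; [right | left]. Qed.

End RingPowers.

Lemma scalar_intertwine_sym (R : comNzRingType) n (A B V : 'M[R]_n.+1) (e : R) :
  V * V = 1 -> e * e = 1 -> A * V = e%:M * B -> B * V = e%:M * A.
Proof.
move=> VV ee AVB.
have -> : B = e%:M * (A * V) by rewrite AVB mulrA -rmorphM ee rmorph1 mul1r.
by rewrite -!mulrA VV mulr1.
Qed.

Lemma unitarymx1 (C : numClosedFieldType) n : (1%:M : 'M[C]_n) \is unitarymx.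
Proof. by apply/unitarymxP; rewrite trmx1 map_mx1 mulmx1. Qed.

Lemma unitarymxX (C : numClosedFieldType) n (A : 'M[C]_n.+1) k : A \is unitarymx -> A ^+ k \is unitarymx.
Proof.
move=> uA; elim: k => [|k IH]; first by rewrite expr0 -idmxE unitarymx1.
by rewrite exprS; apply: mul_unitarymx.
Qed.

Lemma eqn_modS L n : (1 < L)%N -> (n == n.+1 %[mod L]) = false.
Proof.
move=> L_gt1; rewrite -addn1 -{1}[n]addn0 eqn_modDl mod0n.
by rewrite (modn_small L_gt1).
Qed.

Lemma big_nat_pairs (R : Type) (idx : R) (op : Monoid.law idx) n (F : nat -> R) :
  \big[op/idx]_(0 <= k < n.*2) F k = \big[op/idx]_(0 <= k < n) op (F k.*2) (F k.*2.+1).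
Proof.
elim: n => [|n IH]; first by rewrite !big_geq.
by rewrite doubleS !big_nat_recr //= IH Monoid.mulmA.
Qed.

Lemma mkseqS_cons (T : Type) (f : nat -> T) n :
  mkseq f n.+1 = f 0%N :: mkseq (fun k => f k.+1) n.
Proof. by rewrite /mkseq /= -(addn0 1%N) iotaDl -map_comp. Qed.

Lemma last_mkseqS (T : Type) (f : nat -> T) n :
  last (f 0%N) (mkseq (fun k => f k.+1) n) = f n.
Proof. by elim: n f => [|n IH] f //; rewrite mkseqS_cons /= (IH (fun k => f k.+1)). Qed.

Lemma mulCii : 'i * 'i = -1 :> algC.
Proof. by rewrite -expr2 sqrCi. Qed.

(* Unlike [rmorphN], this keeps the conjugation in the shape [conjCi] matches. *)
Lemma conjCN (x : algC) : (- x)^* = - x^*.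
Proof. exact: rmorphN. Qed.

Ltac mx2_eq :=
  rewrite /pauli_x /pauli_y /pauli_z /id2;
  apply/matrixP => [[[|[|//]] ?] [[|[|//]] ?]];
  rewrite !(mxE, big_ord_recl, big_ord0) /= ?mxE /=
    ?(mul0r, mulr0, add0r, addr0, mul1r, mulr1, mulrN, mulNr,
      opprK, oppr0, mulCii, conjC0, conjC1, conjCN, conjCi).

Section Kron.
Implicit Types A B C D : 'M[algC]_2.

Lemma kron_mul A B C D : kron A B * kron C D = kron (A * C) (B * D).
Proof. by rewrite -!mulmxE; exact: (@tensmx_mul _ 2 2 2 2 2 2). Qed.

Lemma kronNl A B : kron (- A) B = - kron A B.
Proof. by apply/matrixP => i j; rewrite !mxE mulNr. Qed.

Lemma kronNr A B : kron A (- B) = - kron A B.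
Proof. by apply/matrixP => i j; rewrite !mxE mulrN. Qed.

Lemma kron11 : kron 1 1 = 1.
Proof.
apply/matrixP => i j; rewrite -idmxE.
case: (@mxtens_indexP 2 2 i) => i1 i2; case: (@mxtens_indexP 2 2 j) => j1 j2.
rewrite /kron (@tensmxE _ 2 2 2 2) !mxE.
rewrite (inj_eq (can_inj (@mxtens_indexK 2 2))) xpair_eqE.
by case: (i1 == j1); case: (i2 == j2); rewrite ?mul1r ?mul0r.
Qed.

Lemma kronN1l : kron (- 1) 1 = -1.
Proof. by rewrite kronNl kron11. Qed.

Lemma kronN1r : kron 1 (- 1) = -1.
Proof. by rewrite kronNr kron11. Qed.

Lemma kron_adj A B : (kron A B)^t* = kron (A^t*) (B^t*).
Proof. by apply/matrixP => i j; rewrite !mxE rmorphM. Qed.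

End Kron.

Definition link_tau (al : btype) : 'M[algC]_2 :=
  match al with Ba => pauli_y | Bb | Bc => - pauli_x end.

Definition link_sigma (al : btype) : 'M[algC]_2 :=
  match al with Ba => id2 | Bb => pauli_z | Bc => pauli_y end.

Lemma UmatE al : Umat al = kron (link_tau al) (link_sigma al).
Proof. by case: al; rewrite //= kronNl. Qed.

Ltac kron_eq := rewrite ?UmatE ?kron_mul; congr kron; mx2_eq.

Lemma Umat_involutive al : Umat al * Umat al = 1.
Proof. by rewrite -kron11; case: al; kron_eq. Qed.

Lemma Umat_hermitian al : (Umat al)^t* = Umat al.
Proof. by rewrite UmatE kron_adj; case: al; congr kron; mx2_eq. Qed.

Lemma Umat_unitary al : Umat al \is unitarymx.
Proof. by apply/unitarymxP; rewrite Umat_hermitian mulmxE Umat_involutive. Qed.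

Definition T1 : 'M[algC]_4 := Umat Bc * Umat Ba.
Definition T2 : 'M[algC]_4 := Umat Bc * Umat Bb.

Lemma T1_kron : T1 = kron (- 'i *: pauli_z) pauli_y.
Proof. by rewrite /T1; kron_eq. Qed.

Lemma T2_kron : T2 = kron 1 ('i *: pauli_x).
Proof. by rewrite /T2; kron_eq. Qed.

Lemma T1_sqr : T1 * T1 = -1.
Proof. by rewrite T1_kron -kronN1l; kron_eq. Qed.

Lemma T2_sqr : T2 * T2 = -1.
Proof. by rewrite T2_kron -kronN1r; kron_eq. Qed.

Lemma T1_expr4 : T1 ^+ 4 = 1.
Proof. exact: expr4_sqrN1 T1_sqr. Qed.

Lemma T2_expr4 : T2 ^+ 4 = 1.
Proof. exact: expr4_sqrN1 T2_sqr. Qed.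

Lemma T2_T1_anticomm : T2 * T1 = - (T1 * T2).
Proof. by rewrite T1_kron T2_kron !kron_mul -kronNr; kron_eq. Qed.

Lemma T1_unitary : T1 \is unitarymx.
Proof. exact: mul_unitarymx (Umat_unitary _) (Umat_unitary _). Qed.

Lemma T2_unitary : T2 \is unitarymx.
Proof. exact: mul_unitarymx (Umat_unitary _) (Umat_unitary _). Qed.

Lemma hexagon_Umat : (Umat Bc * Umat Ba * Umat Bb) ^+ 2 = -1.
Proof.
have -> : Umat Bc * Umat Ba * Umat Bb = kron (- pauli_y) ('i *: pauli_x).
  by rewrite -/T1 T1_kron; kron_eq.
by rewrite expr2 -kronN1r; kron_eq.
Qed.

Section Paths.
Variables (L1 L2 : nat) (R : pzRingType) (F : site L1 L2 -> site L1 L2 -> R).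

Lemma pathprod1 x : pathprod F [:: x] = 1.
Proof. by rewrite /pathprod big_nil. Qed.

Lemma pathprod_cons x y s : pathprod F [:: x, y & s] = F x y * pathprod F (y :: s).
Proof. by rewrite /pathprod big_cons. Qed.

Lemma pathprod_mkseq (f : nat -> site L1 L2) n :
  pathprod F (mkseq f n.+1) = \prod_(0 <= k < n) F (f k) (f k.+1).
Proof.
elim: n f => [|n IH] f; first by rewrite pathprod1 big_geq.
rewrite mkseqS_cons (mkseqS_cons (fun k => f k.+1)) pathprod_cons.
by rewrite -(mkseqS_cons (fun k => f k.+1)) IH big_nat_recl.
Qed.

Lemma pathprod_zigzag (f : nat -> site L1 L2) (T : R) n :
  (forall k, F (f k.*2) (f k.*2.+1) * F (f k.*2.+1) (f k.*2.+2) = T) ->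
  pathprod F (mkseq f (n.*2).+1) = T ^+ n.
Proof.
move=> stepT; rewrite pathprod_mkseq big_nat_pairs /=.
by under eq_bigr do rewrite stepT; rewrite prodr_const_nat subn0.
Qed.

End Paths.

Section Torus.
Variables (L1 L2 : nat) (h1 : (0 < L1)%N) (h2 : (0 < L2)%N).

Local Notation site := (site L1 L2).
Local Notation mksite := (mksite h1 h2).
Local Notation siteA := (siteA h1 h2).
Local Notation siteB := (siteB h1 h2).
Local Notation U := (U h1 h2).

Lemma mksite_congr s n1 n2 n1' n2' :
  n1 = n1' %[mod L1] -> n2 = n2' %[mod L2] -> mksite s n1 n2 = mksite s n1' n2'.
Proof. by move=> e1 e2; congr (_, (_, _)); apply: val_inj. Qed.

Lemma U_sym i j : U i j = U j i.
Proof. by case: i j => [[] x] [[] y]. Qed.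

Lemma U_bond_c n1 n2 : U (siteA n1 n2) (siteB n1 n2) = Umat Bc.
Proof. by rewrite /U /= /bondAB eqxx. Qed.

Lemma U_bond_a n1 n2 : (1 < L1)%N -> U (siteA n1.+1 n2) (siteB n1 n2) = Umat Ba.
Proof.
move=> L1_gt1; rewrite /U /= /bondAB /siteA /mksite /= !xpair_eqE /=.
by rewrite -!val_eqE /= modnDml addn1 !modn_mod !eqxx eqn_modS.
Qed.

Lemma U_bond_b n1 n2 :
  (1 < L1)%N -> (1 < L2)%N -> U (siteA n1 n2.+1) (siteB n1 n2) = Umat Bb.
Proof.
move=> L1_gt1 L2_gt1; rewrite /U /= /bondAB /siteA /mksite /= !xpair_eqE /=.
by rewrite -!val_eqE /= !modnDml !addn1 !modn_mod !eqxx eqn_modS // !andbF /=.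
Qed.

Definition gaugeA (x : 'I_L1 * 'I_L2) : 'M[algC]_4 := T1 ^+ x.1 * T2 ^+ x.2.

Definition gauge (i : site) : 'M[algC]_4 :=
  if i.1 then gaugeA i.2 * Umat Bc else gaugeA i.2.

(* Like [U], [eta] vanishes on pairs of sites that are not bonds, so that
   [gauge_link] below holds for all pairs. *)
Definition eta_AB (x y : 'I_L1 * 'I_L2) : algC :=
  match bondAB h1 h2 x y with
  | Some Ba => (-1) ^+ y.2
  | Some _ => 1
  | None => 0
  end.

Definition eta (i j : site) : algC :=
  match i, j with
  | (false, x), (true, y) | (true, y), (false, x) => eta_AB x y
  | _, _ => 0
  end.

Lemma gauge_unitary i : gauge i \is unitarymx.
Proof.
have gaugeA_unitary x : gaugeA x \is unitarymx.
  by apply: mul_unitarymx; apply: unitarymxX; [exact: T1_unitary | exact: T2_unitary].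
case: i => [[] x]; rewrite /gauge; last exact: gaugeA_unitary.
exact: mul_unitarymx (gaugeA_unitary x) (Umat_unitary _).
Qed.

Lemma eta_sym i j : eta i j = eta j i.
Proof. by case: i j => [[] x] [[] y]. Qed.

Lemma eta_sign i j : adjacent h1 h2 i j -> eta i j = 1 \/ eta i j = -1.
Proof.
case: i j => [[] x] [[] y] //=; rewrite /adjacent /= /eta_AB;
  by case: bondAB => // -[] _; [exact: signr_pm1 | left | left].
Qed.

Hypotheses (d1 : (4 %| L1)%N) (d2 : (4 %| L2)%N).

Lemma gaugeA_bond x y :
  gaugeA x * U (false, x) (true, y) = (eta_AB x y)%:M * gauge (true, y).
Proof.
rewrite /gauge /gaugeA /eta_AB /U [bond _ _]/bond /bondAB [(true, y).1]/= [(true, y).2]/=.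
case: eqP => [-> | _]; first by rewrite idmxE mul1r.
case: eqP => [[xE] | _].
  have -> : x.1 = ((y.1 + 1) %% L1)%N :> nat by rewrite -xE.
  have -> : x.2 = y.2 :> nat by rewrite -xE /= modn_small.
  rewrite -(expr_mod _ T1_expr4) modn_dvdm // expr_mod ?T1_expr4 // addn1 exprSr.
  rewrite -(mulrA _ T1) (anticomm_exprr _ T2_T1_anticomm) rmorph_sign.
  by rewrite mulr_signCA -!mulrA Umat_involutive mulr1.
case: eqP => [[xE] | _]; last by rewrite mulr0 raddf0 mul0r.
have -> : x.1 = y.1 :> nat by rewrite -xE /= modn_small.
have -> : x.2 = ((y.2 + 1) %% L2)%N :> nat by rewrite -xE.
rewrite -(expr_mod _ T2_expr4) modn_dvdm // expr_mod ?T2_expr4 // addn1 exprSr.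
by rewrite -!mulrA Umat_involutive mulr1 idmxE mul1r.
Qed.

Lemma gauge_link i j : gauge i * U i j = (eta i j)%:M * gauge j.
Proof.
case: i j => [[] x] [[] y]; try by rewrite /U /= mulr0 raddf0 mul0r.
  have := gaugeA_bond y x; rewrite U_sym /U [bond _ _]/bond /eta /eta_AB.
  case: bondAB => [al|]; last by rewrite !mulr0 raddf0 !mul0r.
  apply: scalar_intertwine_sym; first exact: Umat_involutive.
  by case: al; rewrite ?mulr1 // -expr2 sqrr_sign.
exact: gaugeA_bond.
Qed.

Lemma gauge_transform i j : gauge i *m U i j *m (gauge j)^t* = (eta i j)%:M.
Proof.
have link := gauge_link i j; rewrite -mulmxE in link.
by rewrite link mulmxtVK ?gauge_unitary.
Qed.

Lemma gauge_pathprod x s :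
  gauge x * pathprod U (x :: s) = (pathprod eta (x :: s))%:M * gauge (last x s).
Proof.
elim: s x => [|y s IH] x; first by rewrite !pathprod1 mulr1 rmorph1 mul1r.
by rewrite !pathprod_cons mulrA gauge_link -mulrA IH mulrA -rmorphM.
Qed.

Lemma gauge_loop x s c :
  last x s = x -> pathprod U (x :: s) = c%:M -> pathprod eta (x :: s) = c.
Proof.
move=> closed loopU; have := gauge_pathprod x s.
rewrite closed loopU -mulmxE scalar_mxC mulmxE.
move/(mulIr (unitarymx_unit (gauge_unitary x)))/matrixP/(_ 0 0).
by rewrite !mxE /= !mulr1n.
Qed.

Let L1_gt1 : (1 < L1)%N := leq_trans (isT : (1 < 4)%N) (dvdn_leq h1 d1).
Let L2_gt1 : (1 < L2)%N := leq_trans (isT : (1 < 4)%N) (dvdn_leq h2 d2).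

Lemma pathprod_U_C1 : pathprod U (C1 h1 h2) = 1%:M.
Proof.
rewrite idmxE (pathprod_zigzag (T := T1)) ?(expr_dvd T1_expr4 d1) // => k.
rewrite /= odd_double uphalf_double doubleK.
by rewrite U_bond_c U_sym U_bond_a.
Qed.

Lemma pathprod_U_C2 : pathprod U (C2 h1 h2) = 1%:M.
Proof.
rewrite idmxE (pathprod_zigzag (T := T2)) ?(expr_dvd T2_expr4 d2) // => k.
rewrite /= odd_double uphalf_double doubleK.
by rewrite U_bond_c U_sym U_bond_b.
Qed.

Lemma pathprod_U_hexagon n1 n2 : pathprod U (hexagon h1 h2 n1 n2) = - 1%:M.
Proof.
set m2 := (n2 + L2).-1.
have site_n2 s n1' : mksite s n1' n2 = mksite s n1' m2.+1.
  by apply: mksite_congr; rewrite // /m2 prednK ?modnDr // addn_gt0 h2 orbT.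
rewrite /hexagon /siteA /siteB -/m2 !site_n2 !pathprod_cons pathprod1 mulr1.
rewrite U_bond_c (U_sym (siteB _ _)) U_bond_a // U_bond_b // (U_sym (siteB _ _)).
rewrite U_bond_c U_bond_a // (U_sym (siteB _ _)) U_bond_b //.
by rewrite idmxE -hexagon_Umat expr2 !mulrA.
Qed.

Lemma pathprod_eta_C1 : pathprod eta (C1 h1 h2) = 1.
Proof.
move: pathprod_U_C1; rewrite /C1 mkseqS_cons; apply: gauge_loop.
rewrite (last_mkseqS (fun k => mksite (odd k) k./2 0)) odd_double doubleK.
by apply: mksite_congr; rewrite ?modnn ?mod0n.
Qed.

Lemma pathprod_eta_C2 : pathprod eta (C2 h1 h2) = 1.
Proof.
move: pathprod_U_C2; rewrite /C2 mkseqS_cons; apply: gauge_loop.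
rewrite (last_mkseqS (fun k => mksite (odd k) 0 k./2)) odd_double doubleK.
by apply: mksite_congr; rewrite ?modnn ?mod0n.
Qed.

Lemma pathprod_eta_hexagon n1 n2 : pathprod eta (hexagon h1 h2 n1 n2) = -1.
Proof. by apply: gauge_loop; rewrite // raddfN pathprod_U_hexagon. Qed.

End Torus.

Theorem mainTheorem4 (L1 L2 : nat) (h1 : (0 < L1)%N) (h2 : (0 < L2)%N)
    (d1 : (4 %| L1)%N) (d2 : (4 %| L2)%N) :
  [/\ pathprod (U h1 h2) (C1 h1 h2) = 1%:M,
      pathprod (U h1 h2) (C2 h1 h2) = 1%:M,
      (forall m1 : 'I_L1, forall m2 : 'I_L2,
         pathprod (U h1 h2) (hexagon h1 h2 m1 m2) = - 1%:M) &
      exists (g : site L1 L2 -> 'M[algC]_4) (eta : site L1 L2 -> site L1 L2 -> algC),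
        [/\ (forall j, g j \is unitarymx),
            (forall i j, adjacent h1 h2 i j ->
               [/\ eta i j = eta j i, eta i j = 1 \/ eta i j = -1 &
                   g i *m U h1 h2 i j *m hadj (g j) = (eta i j)%:M]),
            (forall m1 : 'I_L1, forall m2 : 'I_L2,
               pathprod eta (hexagon h1 h2 m1 m2) = -1),
            pathprod eta (C1 h1 h2) = 1 &
            pathprod eta (C2 h1 h2) = 1]].
Proof.
split; [exact: pathprod_U_C1 | exact: pathprod_U_C2 | |].
  by move=> m1 m2; exact: pathprod_U_hexagon.
exists (@gauge L1 L2), (eta h1 h2); split.
- exact: gauge_unitary.
- move=> i j adj; split; [exact: eta_sym | exact: eta_sign adj |].
  by rewrite /hadj map_trmx; exact: gauge_transform.
- by move=> m1 m2; exact: pathprod_eta_hexagon.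
- exact: pathprod_eta_C1.
- exact: pathprod_eta_C2.
Qed.
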